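(* Let $G=(V,E)$ be a connected, $d$-regular graph on $n$ vertices with adjacency matrix $A$, let $D=d\cdot I_n$, and let $\{\phi_1,\dots,\phi_n\}\subset\mathbb{R}^n$ be an orthonormal basis of eigenvectors of the symmetric matrix $AD^{-1}$, where $\phi_i$ has eigenvalue $\lambda_i$, the eigenvalues are ordered as $1=\lambda_1\geq|\lambda_2|\geq\dots\geq|\lambda_n|\geq 0$, and $\phi_1 = \frac{1}{\sqrt n}(1,\dots,1)$. Let $1\leq \ell\leq n-1$. Then there exist a subset $U\subset V$ with $\#U\leq \ell$ and nonnegative weights $a_u\geq 0$ ($u\in U$) such that for all functions $f:V\to\mathbb{R}$, $$\left|\frac{1}{|V|}\sum_{v\in V} f(v) - \sum_{u\in U} a_u f(u)\right| \leq \left(\sum_{i=\ell+1}^n \langle \phi_i, f\rangle^2\right)^{1/2}.$$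
   Context: Functions $f:V\to\mathbb{R}$ are identified with vectors in $\mathbb{R}^n$ indexed by the vertices, and $\langle\cdot,\cdot\rangle$ is the standard inner product on $\mathbb{R}^n$. *)

From HB Require Import structures.
From mathcomp Require Import all_boot all_order all_algebra.
Set Implicit Arguments. Unset Strict Implicit. Unset Printing Implicit Defensive.
Import Order.TTheory GRing.Theory Num.Theory.
Local Open Scope ring_scope.

Definition simple_graph (n : nat) (e : rel 'I_n) : Prop :=
  symmetric e /\ irreflexive e.

Definition connected_graph (n : nat) (e : rel 'I_n) : Prop :=
  forall u v : 'I_n, connect e u v.

Definition regular_graph (n d : nat) (e : rel 'I_n) : Prop :=
  forall v : 'I_n, #|[set w | e v w]| = d.

Definition adjmx (R : nzRingType) (n : nat) (e : rel 'I_n) : 'M[R]_n :=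
  \matrix_(i, j) (e i j)%:R.

Definition dotf (R : nzRingType) (n : nat) (f g : 'I_n -> R) : R :=
  \sum_(v < n) f v * g v.

From HB Require Import structures.
From mathcomp Require Import all_boot all_order all_algebra zify ring.
Import Order.TTheory GRing.Theory Num.Theory.
Local Open Scope ring_scope.

(* Carathéodory: the uniform probability vector w has the same inner products
   with phi_1, ..., phi_l as some probability vector a supported on at most l
   vertices; as long as the support exceeds l, moving along a kernel direction
   of these l constraints removes a support point, and the constant phi_1 makes
   the total mass one of the constraints.  The error q = w - a is orthogonal to
   phi_1, ..., phi_l, so by Parseval and Cauchy-Schwarz
   |<q, f>| <= |q| (sum_(i > l) <phi_i, f>^2)^(1/2), while
   |q|^2 = |a|^2 - 1/n <= 1. *)

Lemma cauchy_schwarz_sum (R : realFieldType) (I : finType) (P : pred I) (x y : I -> R) :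
  (\sum_(i | P i) x i * y i) ^+ 2 <=
  (\sum_(i | P i) x i ^+ 2) * (\sum_(i | P i) y i ^+ 2).
Proof.
set Z := \sum_(i | P i) x i * y i; set X := \sum_(i | P i) x i ^+ 2.
set Y := \sum_(i | P i) y i ^+ 2.
have X_ge0 : 0 <= X by rewrite sumr_ge0 // => i _; apply: sqr_ge0.
have [X0 | X_neq0] := eqVneq X 0.
  have x0 i : P i -> x i = 0.
    move=> Pi; apply/eqP; rewrite -sqrf_eq0; apply/eqP; move: i Pi.
    by apply/psumr_eq0P => // i _; apply: sqr_ge0.
  by rewrite /Z big1 ?expr0n ?X0 ?mul0r // => i /x0->; rewrite mul0r.
(* [0 <= sum (X y_i - Z x_i)^2 = X (X Y - Z^2)] *)
have : 0 <= \sum_(i | P i) (X * y i - Z * x i) ^+ 2.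
  by rewrite sumr_ge0 // => i _; apply: sqr_ge0.
have -> : \sum_(i | P i) (X * y i - Z * x i) ^+ 2 =
    \sum_(i | P i) (X ^+ 2 * y i ^+ 2 - (2 * X * Z) * (x i * y i) + Z ^+ 2 * x i ^+ 2).
  by apply: eq_bigr => i _; ring.
rewrite big_split sumrB /= -!mulr_sumr -/X -/Y -/Z.
have -> : X ^+ 2 * Y - 2 * X * Z * Z + Z ^+ 2 * X = X * (X * Y - Z ^+ 2) by ring.
by rewrite pmulr_rge0 ?subr_ge0 // lt_def X_neq0.
Qed.

Lemma supported_kernel_vector {F : fieldType} {n l} (P : 'M[F]_(n, l)) (S : {set 'I_n}) :
  (l < #|S|)%N ->
  exists mu : 'rV_n, [/\ mu != 0, mu *m P = 0 & forall v, v \notin S -> mu 0 v = 0].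
Proof.
move=> lt_l_S.
pose D : 'M[F]_(#|S|, n) := \matrix_(j, v) (v == enum_val j)%:R.
have : (0 < \rank (kermx (D *m P)))%N.
  by rewrite mxrank_ker; have := rank_leq_col (D *m P); lia.
rewrite lt0n mxrank_eq0 -nz_row_eq0; set y := nz_row _ => y_neq0.
have yDP : y *m (D *m P) = 0 by apply/sub_kermxP; apply: nz_row_sub.
exists (y *m D); split; last first.
- move=> v vNS; rewrite !mxE big1 // => j _; rewrite mxE.
  by case: eqP => [vj | _]; [move: vNS; rewrite vj enum_valP | rewrite mulr0].
- by rewrite -mulmxA.
apply: contraNneq y_neq0 => yD0; apply/eqP/rowP => j.
move/rowP/(_ (enum_val j)): yD0; rewrite !mxE (bigD1 j) //= mxE eqxx mulr1.
rewrite big1 ?addr0 // => k kj; rewrite mxE (inj_eq enum_val_inj) eq_sym.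
by rewrite (negbTE kj) mulr0.
Qed.

Definition row_support {R : nmodType} {n} (w : 'rV[R]_n) : {set 'I_n} :=
  [set v | w 0 v != 0].

Section Caratheodory.
Variables (R : realFieldType) (n l : nat) (P : 'M[R]_(n, l)).
(* E.g. a column of [P] is constant and nonzero; it forces every nonzero
   kernel vector to have a positive entry. *)
Hypothesis P_mass : forall mu : 'rV_n, mu *m P = 0 -> \sum_v mu 0 v = 0.

Lemma caratheodory_step (w : 'rV[R]_n) :
  (forall v, 0 <= w 0 v) -> (l < #|row_support w|)%N ->
  exists w' : 'rV_n, [/\ forall v, 0 <= w' 0 v, w' *m P = w *m P &
                         row_support w' \proper row_support w].
Proof.
move=> w_ge0 /(supported_kernel_vector P)[mu [mu_neq0 muP mu_supp]].
have [v1 mu_v1_gt0] : exists v, 0 < mu 0 v.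
  apply/existsP; apply: contraNT mu_neq0 => /existsPn mu_le0.
  apply/eqP/rowP => v; rewrite mxE; apply/eqP; rewrite -oppr_eq0; apply/eqP.
  move: v isT; apply/psumr_eq0P => [v _|]; first by rewrite oppr_ge0 leNgt mu_le0.
  by rewrite sumrN (P_mass _ muP) oppr0.
(* Move from w along -mu until the first weight vanishes. *)
case: (@arg_minP _ _ _ v1 (fun v => 0 < mu 0 v) (fun v => w 0 v / mu 0 v)) => //.
move=> v0 mu_v0_gt0 v0_min; set t := w 0 v0 / mu 0 v0.
have mu_eq0 v : w 0 v = 0 -> mu 0 v = 0 by move=> wv0; rewrite mu_supp // inE wv0 eqxx.
exists (w - t *: mu); split.
- move=> v; rewrite !mxE subr_ge0; have [mu_v_gt0 | mu_v_le0] := ltP 0 (mu 0 v).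
    by rewrite -ler_pdivlMr // v0_min.
  by rewrite (le_trans _ (w_ge0 v)) // mulr_ge0_le0 // divr_ge0 ?w_ge0 ?ltW.
- by rewrite mulmxBl -scalemxAl muP scaler0 subr0.
apply/properP; split.
  apply/subsetP => v; rewrite !inE !mxE; apply: contraNneq => wv0.
  by rewrite wv0 mu_eq0 // mulr0 subrr.
exists v0; first by rewrite inE; apply: contraTneq mu_v0_gt0 => /mu_eq0->; rewrite ltxx.
by rewrite inE !mxE negbK /t mulfVK ?subrr // gt_eqF.
Qed.

Lemma caratheodory (w : 'rV[R]_n) : (forall v, 0 <= w 0 v) ->
  exists a : 'rV_n, [/\ forall v, 0 <= a 0 v, (#|row_support a| <= l)%N &
                        a *m P = w *m P].
Proof.
have [k] := ubnP #|row_support w|; elim: k w => // k IH w lt_supp_k w_ge0.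
have [le_supp_l | /(caratheodory_step _ w_ge0)[w' [w'_ge0 w'P w'_supp]]] :=
  leqP #|row_support w| l; first by exists w.
have [|a [a_ge0 a_supp aP]] := IH w' _ w'_ge0.
  by rewrite -ltnS (leq_trans _ lt_supp_k) // ltnS proper_card.
by exists a; rewrite aP w'P.
Qed.

End Caratheodory.

Lemma dotf_orthogonal_expansion {R : comUnitRingType} {n} {Phi : 'M[R]_n} :
  Phi^T *m Phi = 1%:M -> forall x y : 'I_n -> R,
  dotf x y = \sum_i dotf (fun v => Phi v i) x * dotf (fun v => Phi v i) y.
Proof.
move=> /mulmx1C/matrixP PhiPhiT x y.
have Phi_rows u v : \sum_i Phi u i * Phi v i = (u == v)%:R.
  by move: (PhiPhiT u v); rewrite !mxE => <-; apply: eq_bigr => i _; rewrite mxE.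
transitivity (\sum_u \sum_v x u * y v * (u == v)%:R).
  apply: eq_bigr => u _; rewrite (bigD1 u) //= eqxx mulr1 big1 ?addr0 // => v.
  by rewrite eq_sym => /negbTE->; rewrite mulr0.
rewrite [RHS](eq_bigr (fun i => \sum_u \sum_v x u * y v * (Phi u i * Phi v i))).
  rewrite [RHS]exchange_big; apply: eq_bigr => u _; rewrite [RHS]exchange_big.
  by apply: eq_bigr => v _; rewrite -mulr_sumr Phi_rows.
move=> i _; rewrite /dotf big_distrlr /=.
by apply: eq_bigr => u _; apply: eq_bigr => v _; ring.
Qed.

Lemma dotf_le_tail_energy (R : rcfType) n l (Phi : 'M[R]_n) (q f : 'I_n -> R) :
  Phi^T *m Phi = 1%:M -> \sum_v q v ^+ 2 <= 1 ->
  (forall i : 'I_n, (i < l)%N -> dotf (fun v => Phi v i) q = 0) ->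
  `|dotf q f| <= Num.sqrt (\sum_(i < n | (l <= i)%N) dotf (fun v => Phi v i) f ^+ 2).
Proof.
move=> orthoPhi q_le1 q_head.
set c := fun i => dotf (fun v => Phi v i) f; set s := fun i => dotf (fun v => Phi v i) q.
have q_tail : dotf q f = \sum_(i < n | (l <= i)%N) s i * c i.
  rewrite (dotf_orthogonal_expansion orthoPhi) (bigID (fun i : 'I_n => (l <= i)%N)) /=.
  by rewrite [X in _ + X]big1 ?addr0 // => i; rewrite -ltnNge => /q_head->; rewrite mul0r.
have s_tail_le1 : \sum_(i < n | (l <= i)%N) s i ^+ 2 <= 1.
  apply: le_trans q_le1; rewrite [X in _ <= X](_ : _ = dotf q q); last first.
    by apply: eq_bigr => v _; rewrite expr2.
  rewrite (dotf_orthogonal_expansion orthoPhi).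
  rewrite [X in _ <= X](bigID (fun i : 'I_n => (l <= i)%N)) /=.
  apply: ler_wpDr; first by rewrite sumr_ge0 // => i _; rewrite -expr2 sqr_ge0.
  by apply: ler_sum => i _; rewrite expr2.
rewrite -sqrtr_sqr ler_sqrt ?sumr_ge0 // => [|i _]; last exact: sqr_ge0.
rewrite q_tail; apply: le_trans (cauchy_schwarz_sum _ _ _ _ _) _.
by rewrite ler_piMl ?sumr_ge0 // => i _; apply: sqr_ge0.
Qed.

Lemma sum_sqr_uniform_subr_le1 (R : realFieldType) n (a : 'I_n -> R) :
  (forall v, 0 <= a v) -> \sum_v a v = 1 -> \sum_v (n%:R^-1 - a v) ^+ 2 <= 1.
Proof.
case: n a => [|n] a a_ge0 a_sum1; first by rewrite big_ord0 ler01.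
set c : R := n.+1%:R^-1.
have c_sum1 : \sum_(v < n.+1) c = 1.
  by rewrite sumr_const card_ord -mulr_natr mulVf ?pnatr_eq0.
have a_le1 v : a v <= 1 by rewrite -a_sum1 (bigD1 v) //= lerDl sumr_ge0.
have -> : \sum_v (c - a v) ^+ 2 =
    c * (\sum_(v < n.+1) c - \sum_v a v) + \sum_v (a v ^+ 2 - c * a v).
  by rewrite -sumrB mulr_sumr -big_split /=; apply: eq_bigr => v _; ring.
rewrite c_sum1 a_sum1 subrr mulr0 add0r -[X in _ <= X]a_sum1 ler_sum // => v _.
by rewrite lerBlDr ler_wpDr ?mulr_ge0 ?invr_ge0 // expr2 ler_piMr.
Qed.

Lemma uniform_quadrature (R : realFieldType) n l (Phi : 'M[R]_n) (i0 : 'I_n) (c : R) :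
  (i0 < l <= n)%N -> c != 0 -> (forall v, Phi v i0 = c) ->
  exists a : 'rV_n, [/\ forall v, 0 <= a 0 v, (#|row_support a| <= l)%N,
    \sum_v a 0 v = 1 &
    forall i : 'I_n, (i < l)%N -> dotf (fun v => Phi v i) (fun v => n%:R^-1 - a 0 v) = 0].
Proof.
move=> /andP[lt_i0_l le_l_n] c_neq0 Phi_i0.
pose P : 'M[R]_(n, l) := \matrix_(v, j) Phi v (widen_ord le_l_n j).
have moment_dotf (x : 'rV_n) (j : 'I_l) :
    (x *m P) 0 j = dotf (fun v => Phi v (widen_ord le_l_n j)) (x 0).
  by rewrite mxE /dotf; apply: eq_bigr => v _; rewrite mxE mulrC.
have mass_moment (x : 'rV_n) : (x *m P) 0 (Ordinal lt_i0_l) = c * \sum_v x 0 v.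
  rewrite moment_dotf mulr_sumr; apply: eq_bigr => v _.
  by rewrite (_ : widen_ord _ _ = i0) ?Phi_i0 //; apply: val_inj.
have P_mass (mu : 'rV_n) : mu *m P = 0 -> \sum_v mu 0 v = 0.
  move/rowP/(_ (Ordinal lt_i0_l)); rewrite mass_moment mxE => /eqP.
  by rewrite mulf_eq0 (negbTE c_neq0) => /eqP.
pose w : 'rV[R]_n := const_mx n%:R^-1.
have [|a [a_ge0 a_supp aP]] := @caratheodory _ _ _ P P_mass w.
  by move=> v; rewrite mxE invr_ge0 ler0n.
exists a; split => //.
  move/rowP/(_ (Ordinal lt_i0_l)): (aP); rewrite !mass_moment => /(mulfI c_neq0)->.
  under eq_bigr do rewrite mxE.
  have n_gt0 : (0 < n)%N by have := ltn_ord i0; lia.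
  by rewrite sumr_const card_ord -[LHS]mulr_natr mulVf // pnatr_eq0 -lt0n.
move=> i lt_il; have widen_i : widen_ord le_l_n (Ordinal lt_il) = i by apply: val_inj.
transitivity (((w - a) *m P) 0 (Ordinal lt_il)); last by rewrite mulmxBl aP subrr mxE.
by rewrite moment_dotf widen_i; apply: eq_bigr => v _; rewrite !mxE.
Qed.

Theorem proposition3 (R : rcfType) (n d : nat) (e : rel 'I_n)
    (Phi : 'M[R]_n) (lambda : 'I_n -> R) (l : nat) :
  simple_graph e ->
  connected_graph e ->
  regular_graph d e ->
  (* orthonormal basis of R^n *)
  Phi^T *m Phi = 1%:M ->
  (* eigenvectors of A D^{-1}, D = d I_n *)
  (forall i : 'I_n,
     (adjmx R e *m invmx ((d%:R : R)%:M)) *m col i Phi = lambda i *: col i Phi) ->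
  (* ordering 1 = lambda_1 >= |lambda_2| >= ... >= |lambda_n| >= 0 *)
  (forall i0 : 'I_n, val i0 = 0%N -> lambda i0 = 1) ->
  (forall i j : 'I_n, (i <= j)%N -> `|lambda j| <= `|lambda i|) ->
  (* phi_1 = (1/sqrt n)(1,...,1) *)
  (forall i0 : 'I_n, val i0 = 0%N -> forall v : 'I_n, Phi v i0 = (Num.sqrt (n%:R : R))^-1) ->
  (1 <= l <= n - 1)%N ->
  exists U : {set 'I_n}, (#|U| <= l)%N /\
  exists a : 'I_n -> R, (forall u, u \in U -> 0 <= a u) /\
  forall f : 'I_n -> R,
    `| (n%:R)^-1 * \sum_(v < n) f v - \sum_(u in U) a u * f u |
      <= Num.sqrt (\sum_(i < n | (l <= i)%N) (dotf (fun v => Phi v i) f) ^+ 2).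
Proof.
move=> _ _ _ orthoPhi _ _ _ Phi_first /andP[l_gt0 l_lt_n].
have n_gt0 : (0 < n)%N by lia.
have [||a [a_ge0 a_supp a_sum1 a_exact]] :=
  @uniform_quadrature _ _ l _ _ _ _ _ (Phi_first (Ordinal n_gt0) erefl).
- by apply/andP; split=> //; lia.
- by rewrite invr_eq0 sqrtr_eq0 -ltNge ltr0n.
exists (row_support a); split => //; exists (a 0); split => // f.
have -> : n%:R^-1 * \sum_v f v - \sum_(u in row_support a) a 0 u * f u
    = dotf (fun v => n%:R^-1 - a 0 v) f.
  rewrite mulr_sumr [X in _ - X]big_mkcond -sumrB; apply: eq_bigr => v _.
  by rewrite inE; case: eqP => [->|_] /=; ring.
apply: dotf_le_tail_energy orthoPhi _ a_exact.
exact: sum_sqr_uniform_subr_le1.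
Qed.
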